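(* Let $\mathcal{G}$ be a class of graphs with bounded expansion, and let $s\in\mathbb{N}$. Then there exists an integer $d=d(\mathcal{G},s)$ such that every $K_{2,s}$-free graph $G\in\mathcal{G}$ is strongly $d$-degenerate and hence satisfies $\mathrm{HG}(G)\le(2d)^d$.
   Context: A graph $H$ is a shallow minor of $G$ at depth $r$ (integer $r\ge0$) if there are disjoint sets $V_1,\dots,V_p\subseteq V(G)$ such that each $G[V_i]$ contains a vertex $x_i$ with every vertex of $V_i$ at distance at most $r$ from $x_i$ in $G[V_i]$, and $H$ is (isomorphic to) a subgraph of the graph obtained by contracting each $V_i$ to a single vertex (two contracted vertices adjacent iff some edge joins the corresponding sets). $\nabla_r(G)$ is the maximum of $e(H)/v(H)$ over all non-empty shallow minors $H$ of $G$ at depth $r$. A class $\mathcal{G}$ has bounded expansion if for every integer $r\ge0$ there is a constant $C_r$ with $\nabla_r(G)\le C_r$ for all $G\in\mathcal{G}$. A graph is $K_{2,s}$-free if it has no subgraph isomorphic to $K_{2,s}$. For an integer $d\ge1$, a vertex $v$ of $G$ is $d$-removable in $G$ if $d_G(v)\le d$ and at most one neighbour $w$ of $v$ has $d_G(w)>d$; $G$ is strongly $d$-degenerate if every non-empty subgraph $G'$ of $G$ contains a vertex $d$-removable in $G'$. Hat guessing number $\mathrm{HG}(G)$: the largest $q$ such that there are functions $f_v\colon[q]^{N_G(v)}\to[q]$ ($v\in V(G)$) with the property that for every colouring $c\colon V(G)\to[q]$ some $v$ has $f_v((c(w))_{w\in N_G(v)})=c(v)$. *)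

From mathcomp Require Import all_boot all_order all_algebra.
Set Implicit Arguments. Unset Strict Implicit. Unset Printing Implicit Defensive.
Import Order.TTheory GRing.Theory Num.Theory.

Record sgraph := SGraph {
  vert :> finType;
  adj : rel vert;
  adj_sym : symmetric adj;
  adj_irr : irreflexive adj }.

Definition edges (G : sgraph) : {set {set G}} :=
  [set A : {set G} | [exists u : G, exists v : G, (A == [set u; v]) && adj u v]].

Definition radius_le (G : sgraph) (V : {set G}) (x : G) (r : nat) : Prop :=
  x \in V /\ forall v, v \in V ->
    exists s : seq G, [/\ path (@adj G) x s, last x s = v,
                         all (fun y => y \in V) s & size s <= r].

(* A depth-r minor model: disjoint branch sets V_i (i < p) with centres x_i. *)
Definition shallow_model (G : sgraph) (r p : nat)
    (Vs : 'I_p -> {set G}) (xs : 'I_p -> G) : Prop :=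
  (forall i j, i != j -> [disjoint Vs i & Vs j]) /\
  (forall i, radius_le (Vs i) (xs i) r).

Definition contr_adj (G : sgraph) (p : nat) (Vs : 'I_p -> {set G}) (i j : 'I_p) : bool :=
  (i != j) && [exists x in Vs i, exists y in Vs j, adj x y].

(* nabla_r(G) <= C: every non-empty subgraph H = (S, F) of a depth-r contraction
   satisfies e(H) <= C * v(H). *)
Definition nabla_le (G : sgraph) (r : nat) (C : rat) : Prop :=
  forall (p : nat) (Vs : 'I_p -> {set G}) (xs : 'I_p -> G),
    shallow_model r Vs xs ->
    forall (S : {set 'I_p}) (F : {set {set 'I_p}}),
      S != set0 ->
      (forall A, A \in F -> exists i j,
          [/\ A = [set i; j], i \in S, j \in S & contr_adj Vs i j]) ->
      (#|F|%:Q <= C * #|S|%:Q)%R.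

Definition bounded_expansion (GC : sgraph -> Prop) : Prop :=
  forall r : nat, exists C : rat, forall G : sgraph, GC G -> nabla_le G r C.

Definition K2s_free (G : sgraph) (s : nat) : Prop :=
  ~ exists (a b : G) (f : 'I_s -> G),
      [/\ a != b, injective f &
          forall i, [/\ f i != a, f i != b, adj a (f i) & adj b (f i)]].

Definition sdeg (G : sgraph) (F : {set {set G}}) (v : G) : nat :=
  #|[set w : G | [set v; w] \in F]|.

Definition d_removable (G : sgraph) (d : nat) (S : {set G}) (F : {set {set G}}) (v : G) : bool :=
  [&& v \in S, sdeg F v <= d &
      #|[set w : G | ([set v; w] \in F) && (d < sdeg F w)]| <= 1].

Definition is_subgraph (G : sgraph) (S : {set G}) (F : {set {set G}}) : Prop :=
  F \subset edges G /\ forall A, A \in F -> A \subset S.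

Definition strongly_degenerate (d : nat) (G : sgraph) : Prop :=
  forall (S : {set G}) (F : {set {set G}}),
    is_subgraph S F -> S != set0 -> exists v, d_removable d S F v.

Definition nbhd_type (G : sgraph) (v : G) := {w : G | adj v w}.

Definition hat_winning (G : sgraph) (q : nat) : Prop :=
  exists f : forall v : G, {ffun nbhd_type v -> 'I_q} -> 'I_q,
    forall c : {ffun G -> 'I_q},
      exists v : G, f v [ffun w : nbhd_type v => c (val w)] = c v.

Definition HG_le (G : sgraph) (N : nat) : Prop :=
  forall q, hat_winning G q -> q <= N.

(** Let (S, F) be a subgraph without d-removable vertex and call a
    vertex heavy if its degree exceeds d.  Every other vertex then has two heavy neighbours;
    fix such a pair for each of them.  Counting degrees, with C a bound on nabla_1,
    (d+1)|heavy| <= 2|F| <= 2C(|heavy| + |light|).  By K_{2,s}-freeness each pair is chosen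
    by at most s light vertices, and contracting every light vertex into its first heavy
    neighbour exhibits the pairs as edges of a depth-1 minor on the heavy vertices, so there
    are at most C|heavy| of them.  Hence (d+1)|heavy| <= 2C(1 + sC)|heavy|, which fails once
    d >= 2C(1 + sC).

    A guessing strategy makes every vertex v forbid one colour, depending only
    on the colours of its neighbours.  With q > 4(4d)^d colours we show more generally that
    if every v in S forbids a set g v c of at most (4d)^(d - deg_S v) colours depending only
    on the colouring c of its neighbours in S, some colouring avoids all forbidden colours.
    Remove a vertex v that is d-removable in G[S].  Each neighbour u of v now forbids the
    colours that were forbidden for u under many choices x of the colour of v: more than
    q/(4d) choices if u is light, which multiplies its budget by at most 4d while its degree
    drops by one, and all but a few choices if u is the heavy neighbour, whose budget was 1.
    A colouring of S - v given by induction then leaves a colour for v that is forbidden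
    neither at v nor, through v, at any neighbour.  Strong D-degeneracy thus gives
    HG <= 4(4D)^D <= (2d)^d for d = 4D, and G is strongly d-degenerate as well. *)

From mathcomp Require Import all_boot all_order all_algebra.
From mathcomp Require Import zify lra.
Set Implicit Arguments. Unset Strict Implicit. Unset Printing Implicit Defensive.
Import Order.TTheory GRing.Theory Num.Theory.

Lemma double_counting (I J : finType) (P : pred I) (Q : pred J) (R : I -> J -> bool) :
  \sum_(i | P i) #|[set j | Q j && R i j]| = \sum_(j | Q j) #|[set i | P i && R i j]|.
Proof.
under eq_bigr do rewrite -sum1dep_card big_mkcondr.
rewrite exchange_big /=.
by under eq_bigr do rewrite -big_mkcondr sum1dep_card.
Qed.

Lemma card_bigcup_le (I T : finType) (P : pred I) (A : I -> {set T}) :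
  #|\bigcup_(i | P i) A i| <= \sum_(i | P i) #|A i|.
Proof.
elim/big_rec2: _ => [|i U n _ IH]; first by rewrite cards0.
by apply: leq_trans (leq_card_setU _ _).1 _; rewrite leq_add2l.
Qed.

Lemma nth_enum_pair (T : finType) (A : {set T}) x0 :
  1 < #|A| -> [/\ nth x0 (enum A) 0 \in A, nth x0 (enum A) 1 \in A &
                 nth x0 (enum A) 0 != nth x0 (enum A) 1].
Proof.
rewrite cardE => A2; have A1 := ltnW A2.
by rewrite -[_ \in A]mem_enum mem_nth // -[_ \in A]mem_enum mem_nth // nth_uniq ?enum_uniq.
Qed.

Definition frequent (T C : finType) (h : T -> {set C}) (t : nat) : {set C} :=
  [set y | t < #|[set x | y \in h x]|].

Lemma card_frequent (T C : finType) (h : T -> {set C}) t a :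
  (forall x, #|h x| <= a) -> #|frequent h t| * t.+1 <= #|T| * a.
Proof.
move=> ha; rewrite -!sum_nat_const.
apply: (@leq_trans (\sum_(y in frequent h t) #|[set x | predT x && (y \in h x)]|)).
  by apply: leq_sum => y; rewrite inE.
rewrite double_counting; apply: leq_sum => x _.
by apply: leq_trans (ha x); apply: subset_leq_card; apply/subsetP => y; rewrite inE => /andP [].
Qed.

Definition recolour (T : finType) q (c : {ffun T -> 'I_q}) (v : T) (x : 'I_q) :
  {ffun T -> 'I_q} := [ffun u => if u == v then x else c u].

Lemma rat_le_nat_eventually (x : rat) : exists2 D, 0 < D & forall n, D <= n -> (x <= n%:R)%R.
Proof.
exists (Num.Def.archi_bound `|x|%R).+1 => // n Dn.
apply: le_trans (ler_norm x) (ltW (lt_le_trans (archi_boundP (normr_ge0 x)) _)).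
by rewrite ler_nat (leq_trans _ Dn).
Qed.

Lemma hat_bound_le D : 0 < D -> 4 * (4 * D) ^ D <= (2 * (4 * D)) ^ (4 * D).
Proof.
move=> D_gt0; apply: (@leq_trans ((8 * D) ^ D.+1)).
  by rewrite expnS leq_mul ?leq_exp2r //; lia.
by rewrite mulnA leq_pexp2l //; lia.
Qed.

Lemma set2_in_edges (G : sgraph) (v w : G) : ([set v; w] \in edges G) = adj v w.
Proof.
apply/idP/idP => [|vw]; last first.
  by rewrite inE; apply/existsP; exists v; apply/existsP; exists w; rewrite eqxx vw.
rewrite inE => /existsP [u /existsP [u' /andP [/eqP E uu']]].
have uu'_neq : u != u' by apply: contraTneq uu' => ->; rewrite adj_irr.
have : u \in [set v; w] by rewrite E set21.
have : u' \in [set v; w] by rewrite E set22.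
rewrite !inE => /orP [] /eqP Eu' /orP [] /eqP Eu; subst;
  by move: uu'_neq uu'; rewrite ?eqxx // => _; rewrite adj_sym.
Qed.

Lemma sum_sdeg_le (G : sgraph) (F : {set {set G}}) (B : {set G}) :
  F \subset edges G -> \sum_(b in B) sdeg F b <= 2 * #|F|.
Proof.
move=> FE.
have card_edge A : A \in F -> #|A| = 2.
  move/(subsetP FE); rewrite inE => /existsP [u /existsP [w /andP [/eqP -> uw]]].
  by rewrite cards2; case: eqP uw => [->|]; rewrite ?adj_irr.
have sdeg_le b : sdeg F b <= #|[set A | (A \in F) && (b \in A)]|.
  rewrite /sdeg -(@card_in_imset _ _ (fun w => [set b; w])); last first.
    move=> w w'; rewrite !inE => /(subsetP FE); rewrite set2_in_edges => bw _ E.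
    have : w \in [set b; w'] by rewrite -E set22.
    by rewrite !inE => /orP [/eqP wb|/eqP //]; rewrite wb adj_irr in bw.
  apply: subset_leq_card; apply/subsetP => A /imsetP [w wF ->].
  by rewrite inE in wF; rewrite inE wF set21.
apply: (@leq_trans (\sum_(b in B) #|[set A | (A \in F) && (b \in A)]|)).
  exact: leq_sum.
rewrite double_counting mulnC -sum_nat_const; apply: leq_sum => A AF.
by rewrite -(card_edge A AF); apply: subset_leq_card; apply/subsetP => b; rewrite inE => /andP [].
Qed.

Definition deg_in (G : sgraph) (S : {set G}) (v : G) : nat := #|[set u in S | adj v u]|.

Lemma deg_in_setD1 (G : sgraph) (S : {set G}) (v u : G) :
  deg_in (S :\ v) u = deg_in S u - ((v \in S) && adj u v).
Proof.
rewrite /deg_in (cardsD1 v [set y in S | adj u y]) inE addKn.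
suff -> : [set y in S :\ v | adj u y] = [set y in S | adj u y] :\ v by [].
by apply/setP => y; rewrite !inE andbA.
Qed.

Lemma sdeg_induced (G : sgraph) (S : {set G}) (v : G) :
  v \in S -> sdeg [set A in edges G | A \subset S] v = deg_in S v.
Proof.
move=> vS; apply: eq_card => u.
have vu_edge := set2_in_edges v u; rewrite inE in vu_edge.
by rewrite !inE vu_edge subUset !sub1set vS andbC.
Qed.

Lemma induced_subgraph (G : sgraph) (S : {set G}) :
  is_subgraph S [set A in edges G | A \subset S].
Proof. by split=> [|A]; [apply/subsetP => A|]; rewrite inE => /andP []. Qed.

Lemma removable_induced (G : sgraph) d (S : {set G}) v :
  d_removable d S [set A in edges G | A \subset S] v ->
  [/\ v \in S, deg_in S v <= d & #|[set u in S | adj v u && (d < deg_in S u)]| <= 1].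
Proof.
case/and3P=> vS; rewrite sdeg_induced // => deg_v heavy_v; split=> //.
apply: leq_trans heavy_v; apply: subset_leq_card; apply/subsetP => u.
rewrite !inE => /and3P [uS vu heavy_u].
have vu_edge := set2_in_edges v u; rewrite inE in vu_edge.
by rewrite vu_edge vu subUset !sub1set vS uS sdeg_induced.
Qed.

Lemma nabla_le_indexed (G : sgraph) r C (T : finType) (S : {set T})
    (Vs : T -> {set G}) (xs : T -> G) (F : {set {set T}}) :
  nabla_le G r C ->
  {in S &, forall i j, i != j -> [disjoint Vs i & Vs j]} ->
  {in S, forall i, radius_le (Vs i) (xs i) r} ->
  S != set0 ->
  (forall A, A \in F -> exists i j, [/\ A = [set i; j], i \in S, j \in S, i != j &
       [exists x in Vs i, exists y in Vs j, adj x y]]) ->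
  (#|F|%:Q <= C * #|S|%:Q)%R.
Proof.
move=> nab disj rad /set0Pn [i0 i0S] HF.
pose ev (k : 'I_#|S|) : T := enum_val k.
have evS k : ev k \in S by exact: enum_valP.
have ev_inj : injective ev by exact: enum_val_inj.
pose er := enum_rank_in i0S.
have erK : {in S, cancel er ev} by exact: enum_rankK_in.
have FS A : A \in F -> A \subset S.
  by case/HF => i [j [-> iS jS _ _]]; rewrite subUset !sub1set iS jS.
pose F' := [set [set k | ev k \in A] | A : {set T} in F].
have card_F' : #|F'| = #|F|.
  apply: card_in_imset => A B AF BF /setP E; apply/setP => x.
  have [AS BS] := (FS A AF, FS B BF).
  case: (boolP (x \in S)) => xS; first by have := E (er x); rewrite !inE erK.
  by rewrite (contraNF (subsetP AS x)) // (contraNF (subsetP BS x)).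
have := nab _ (Vs \o ev) (xs \o ev) _ [set: 'I_#|S|] F'.
rewrite card_F' cardsT card_ord; apply.
- by split=> [k l kl|k]; [apply: disj; rewrite ?(inj_eq ev_inj) | apply: rad].
- by apply/set0Pn; exists (er i0); rewrite inE.
- move=> _ /imsetP [A /HF [i [j [-> iS jS ij ViVj]]] ->].
  exists (er i), (er j); split; rewrite ?inE //.
  + apply/setP => k; rewrite !inE.
    by rewrite -(inj_eq ev_inj) -[k == er j](inj_eq ev_inj) !erK.
  + by rewrite /contr_adj /= !erK // ViVj -(inj_eq ev_inj) !erK // ij.
Qed.

Lemma nabla_edges (G : sgraph) r C (S : {set G}) (F : {set {set G}}) :
  nabla_le G r C -> is_subgraph S F -> S != set0 -> (#|F|%:Q <= C * #|S|%:Q)%R.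
Proof.
move=> nab [FE FS] S0; apply: (nabla_le_indexed (Vs := set1) (xs := id) nab) => //.
- by move=> i j _ _ ij; rewrite disjoints1 inE.
- by move=> i _; split=> [|v]; rewrite ?inE // => /eqP ->; exists [::].
- move=> A AF; have /subsetP/(_ A AF) := FE.
  rewrite inE => /existsP [u /existsP [w /andP [/eqP EA uw]]].
  have := FS A AF; rewrite EA subUset !sub1set => /andP [uS wS].
  exists u, w; split=> //; first by apply: contraTneq uw => ->; rewrite adj_irr.
  by apply/existsP; exists u; rewrite set11; apply/existsP; exists w; rewrite set11.
Qed.

Lemma nabla_pairs (G : sgraph) C (B R : {set G}) (b1 b2 : G -> G) :
  nabla_le G 1 C -> [disjoint B & R] ->
  {in R, forall v, [/\ b1 v \in B, b2 v \in B, b1 v != b2 v, adj v (b1 v) & adj v (b2 v)]} ->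
  (#|[set [set b1 v; b2 v] | v in R]|%:Q <= C * #|B|%:Q)%R.
Proof.
move=> nab BR Hb.
have [B0|B0] := eqVneq B set0.
  suff -> : R = set0 by rewrite B0 imset0 !cards0 mulr0.
  by apply/setP => v; rewrite inE; apply/negbTE/negP => /Hb [+ _ _ _ _]; rewrite B0 inE.
pose Vs b := b |: [set v in R | b1 v == b].
have owner b v : b \in B -> v \in Vs b -> b = if v \in B then v else b1 v.
  move=> bB; rewrite !inE => /orP [/eqP -> | /andP [vR /eqP <-]]; first by rewrite bB.
  by rewrite (disjointFl BR vR).
apply: (nabla_le_indexed (Vs := Vs) (xs := id) nab) => //.
- move=> i j iB jB; apply: contraR => /pred0Pn [v /andP [vi vj]].
  by rewrite (owner i v) // (owner j v).
- move=> b _; split=> [|v]; first by rewrite !inE eqxx.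
  rewrite !inE => /orP [/eqP ->|/andP [vR /eqP vb]]; first by exists [::].
  have [_ _ _ vb1 _] := Hb v vR.
  by exists [:: v]; rewrite /= -vb adj_sym vb1 !inE vR eqxx orbT.
- move=> _ /imsetP [v vR ->]; have [b1B b2B b12 vb1 vb2] := Hb v vR.
  exists (b1 v), (b2 v); split=> //.
  apply/existsP; exists v; rewrite !inE vR eqxx orbT /=.
  by apply/existsP; exists (b2 v); rewrite !inE eqxx.
Qed.

Lemma K2s_free_common_nbrs (G : sgraph) s (a b : G) :
  K2s_free G s -> a != b -> #|[set v | adj a v && adj b v]| < s.
Proof.
move=> K2 ab; rewrite ltnNge; apply/negP => sN; apply: K2.
pose f (i : 'I_s) : G := enum_val (widen_ord sN i).
have fN i : adj a (f i) && adj b (f i) by have := enum_valP (widen_ord sN i); rewrite inE.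
exists a, b, f; split=> // [i j /enum_val_inj /(congr1 val) ij|i]; first exact: val_inj.
have /andP [af bf] := fN i.
by split=> //; [apply: contraTneq af | apply: contraTneq bf] => ->; rewrite adj_irr.
Qed.

Section StrongDegeneracy.

Variables (G : sgraph) (d : nat) (S : {set G}) (F : {set {set G}}).
Hypothesis SF : is_subgraph S F.

Let heavy := [set v in S | d < sdeg F v].
Let heavy_nbrs v := [set w | ([set v; w] \in F) && (d < sdeg F w)].
Let light := [set v in S :\: heavy | 1 < #|heavy_nbrs v|].
Let b1 v := nth v (enum (heavy_nbrs v)) 0.
Let b2 v := nth v (enum (heavy_nbrs v)) 1.
Let pairs := [set [set b1 v; b2 v] | v in light].

Lemma edge_in_subgraph v w : [set v; w] \in F -> [/\ adj v w, v \in S & w \in S].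
Proof.
case: SF => FE FS vwF; have := FS _ vwF; rewrite subUset !sub1set => /andP [vS wS].
by rewrite -set2_in_edges (subsetP FE).
Qed.

Lemma mem_heavy_nbrs v w : w \in heavy_nbrs v -> adj v w /\ w \in heavy.
Proof. by rewrite !inE => /andP [/edge_in_subgraph [vw _ ->] ->]. Qed.

Lemma light_pair v : v \in light ->
  [/\ b1 v \in heavy, b2 v \in heavy, b1 v != b2 v, adj v (b1 v) & adj v (b2 v)].
Proof.
rewrite inE => /andP [_ /(nth_enum_pair v) []].
by move=> /mem_heavy_nbrs [vb1 b1H] /mem_heavy_nbrs [vb2 b2H] b12.
Qed.

Lemma card_heavy : d.+1 * #|heavy| <= 2 * #|F|.
Proof.
apply: leq_trans (sum_sdeg_le heavy SF.1).
by rewrite mulnC -sum_nat_const; apply: leq_sum => v; rewrite inE => /andP [].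
Qed.

Lemma card_light s : K2s_free G s -> #|light| <= s * #|pairs|.
Proof.
move=> K2; rewrite -sum1_card (partition_big (fun v => [set b1 v; b2 v]) (mem pairs)) /=;
  last by move=> v vL; apply: imset_f.
rewrite mulnC -sum_nat_const; apply: leq_sum => _ /imsetP [w wL ->].
rewrite sum1dep_card; have [_ _ b12 _ _] := light_pair wL.
apply/ltnW/leq_ltn_trans/(K2s_free_common_nbrs K2 b12).
apply: subset_leq_card; apply/subsetP => v; rewrite [v \in _]inE => /andP [vL /eqP E]; rewrite inE.
rewrite (adj_sym (b1 w)) (adj_sym (b2 w)).
have [_ _ _ vb1 vb2] := light_pair vL.
have b1w : b1 w \in [set b1 v; b2 v] by rewrite E set21.
have b2w : b2 w \in [set b1 v; b2 v] by rewrite E set22.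
by move: b1w b2w; rewrite !inE => /orP [] /eqP -> /orP [] /eqP ->; rewrite ?vb1 ?vb2.
Qed.

Lemma card_pairs C : nabla_le G 1 C -> (#|pairs|%:Q <= C * #|heavy|%:Q)%R.
Proof.
move=> nab; apply: nabla_pairs nab _ (fun v vL => light_pair vL).
by rewrite disjoint_subset; apply/subsetP => v vH; rewrite inE /= inE in_setD vH.
Qed.

Lemma not_removable_light v : v \in S -> ~~ d_removable d S F v -> v \in heavy :|: light.
Proof.
move=> vS; rewrite /d_removable vS !inE /= negb_and -!ltnNge vS.
by case: (d < sdeg F v).
Qed.

Lemma exists_removable s C :
  nabla_le G 1 C -> K2s_free G s -> (2%:R * C * (1 + s%:R * C) <= d%:R)%R ->
  S != set0 -> exists v, d_removable d S F v.
Proof.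
move=> nab K2 dC S0; apply/existsP; apply: contraT => /existsPn no_rem.
have cover : S \subset heavy :|: light.
  by apply/subsetP => v vS; apply: not_removable_light.
have heavy0 : 0 < #|heavy|.
  have [v0 v0S] := set0Pn _ S0; apply/card_gt0P.
  have /setUP [v0H | /light_pair [b1H _ _ _ _]] := subsetP cover v0 v0S.
    by exists v0.
  by exists (b1 v0).
have cardS : #|S| <= #|heavy| + #|light|.
  exact: leq_trans (subset_leq_card cover) (leq_card_setU _ _).1.
have : (#|F|%:R <= C * #|S|%:R :> rat)%R := nabla_edges nab SF S0.
have : (#|pairs|%:R <= C * #|heavy|%:R :> rat)%R := card_pairs nab.
move: card_heavy (card_light K2) cardS heavy0; rewrite -!(ler_nat rat) !natrM !natrD.
move: (#|heavy|%:R : rat)%R (#|light|%:R : rat)%R (#|S|%:R : rat)%R (#|F|%:R : rat)%R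
  (#|pairs|%:R : rat)%R (ler0n rat #|light|) (ler0n rat #|S|) (ler0n rat #|pairs|) (ler0n rat s).
move=> b l n e m l0 n0 m0 s0 heavy_e light_m n_le b_ge1 m_le e_le.
rewrite -natr1 in heavy_e; have d0 := ler0n rat d.
have C_gt0 : (0 < C)%R by nra.
have Cl_le : (C * l <= C * (s%:R * (C * b)))%R.
  by apply: ler_wpM2l; [exact: ltW | apply: le_trans light_m _; apply: ler_wpM2l].
have dC_b : (2%:R * C * (1 + s%:R * C) * b <= d%:R * b)%R by apply: ler_wpM2r; lra.
nra.
Qed.

End StrongDegeneracy.

Lemma K2s_free_strongly_degenerate (G : sgraph) s d C :
  nabla_le G 1 C -> K2s_free G s -> (2%:R * C * (1 + s%:R * C) <= d%:R)%R ->
  strongly_degenerate d G.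
Proof. by move=> nab K2 dC S F SF; apply: exists_removable nab K2 dC. Qed.

Section HatGame.

Variables (G : sgraph) (d q : nat).

Definition local_on (S : {set G}) (g : G -> {ffun G -> 'I_q} -> {set 'I_q}) : Prop :=
  forall v, v \in S -> forall c c' : {ffun G -> 'I_q},
    (forall u, u \in S -> adj v u -> c u = c' u) -> g v c = g v c'.

Definition within_budget (S : {set G}) (g : G -> {ffun G -> 'I_q} -> {set 'I_q}) : Prop :=
  forall v c, v \in S -> #|g v c| <= (4 * d) ^ (d - deg_in S v).

Definition avoidable (S : {set G}) (g : G -> {ffun G -> 'I_q} -> {set 'I_q}) : Prop :=
  exists c : {ffun G -> 'I_q}, forall v, v \in S -> c v \notin g v c.

Section RemoveVertex.

Variables (S : {set G}) (v : G) (g : G -> {ffun G -> 'I_q} -> {set 'I_q}).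
Hypotheses (d_gt0 : 0 < d) (q_large : 4 * (4 * d) ^ d < q).
Hypotheses (vS : v \in S) (deg_v : deg_in S v <= d)
  (heavy_v : #|[set u in S | adj v u && (d < deg_in S u)]| <= 1).
Hypotheses (g_local : local_on S g) (g_budget : within_budget S g).

(* Once [S :\ v] is coloured, each light neighbour of [v] rules out at most [t] colours of
   [v] and the heavy one at most [q - m.+1]; [m] covers the colours forbidden at [v] itself
   and by the light neighbours, so some colour for [v] survives. *)
Let t := q %/ (4 * d).
Let m := (4 * d) ^ d + d * t.
Let threshold u := if d < deg_in S u then q - m.+1 else t.
Let g_at u c (x : 'I_q) := g u (recolour c v x).
Let lifted u c := if (u \in S) && adj v u then frequent (g_at u c) (threshold u) else g u c.

Fact four_d_gt0 : 0 < 4 * d. Proof. by rewrite muln_gt0 d_gt0. Qed.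

Lemma m_small : 2 * m < q.
Proof. have := leq_divM q (4 * d); rewrite /m /t; nia. Qed.

Lemma g_recolour_nonadj u c x : u \in S -> ~~ adj u v -> g u (recolour c v x) = g u c.
Proof.
move=> uS uv; apply: g_local => // w _ uw; rewrite ffunE.
by case: eqP => // wv; rewrite -wv uw in uv.
Qed.

Lemma lifted_local : local_on (S :\ v) lifted.
Proof.
move=> u /setD1P [uv uS] c1 c2 c12.
have g_at_eq x : g_at u c1 x = g_at u c2 x.
  apply: g_local => // w wS uw; rewrite !ffunE; case: eqP => // /eqP wv.
  by apply: c12; rewrite // !inE wv.
rewrite /lifted uS /=; case: ifP => vu.
  by apply/setP => y; rewrite !inE; congr (_ < _); apply: eq_card => x; rewrite !inE g_at_eq.
apply: g_local => // w wS uw; apply: c12 => //; rewrite !inE wS andbT.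
by apply: (contraFneq _ vu) => wv; rewrite adj_sym -wv.
Qed.

Lemma lifted_budget : within_budget (S :\ v) lifted.
Proof.
move=> u c /setD1P [uv uS]; rewrite deg_in_setD1 vS adj_sym /lifted uS /=.
case: ifP => vu; last by rewrite subn0; apply: g_budget.
have deg_u_gt0 : 0 < deg_in S u by apply/card_gt0P; exists v; rewrite inE vS adj_sym vu.
have budget_at x : #|g_at u c x| <= (4 * d) ^ (d - deg_in S u) by apply: g_budget.
rewrite /threshold; case: ltnP => [heavy_u | light_u].
  move: budget_at; rewrite (_ : d - _ = 0) ?expn0 => [budget_at|]; last by lia.
  have m_lt_q : m < q by have := m_small; lia.
  have := card_frequent (q - m.+1) budget_at; rewrite card_ord muln1 subnSK // => fr_q.
  apply: (@leq_trans 1); last by rewrite expn_gt0 four_d_gt0.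
  rewrite -ltnS -(ltn_pmul2r (_ : 0 < q - m)) ?subn_gt0 //; apply: leq_ltn_trans fr_q _.
  by have := m_small; lia.
have := card_frequent t budget_at; rewrite card_ord => fr_q.
have q_lt := ltn_ceil q four_d_gt0.
rewrite (_ : d - _ = (d - deg_in S u).+1) ?expnS; last by lia.
rewrite -(leq_pmul2r (ltn0Sn t)); apply: leq_trans fr_q _.
move: ((4 * d) ^ (d - deg_in S u)) => P; nia.
Qed.

Lemma sum_threshold : \sum_(u in [set u in S | adj v u]) threshold u <= (q - m.+1) + d * t.
Proof.
rewrite (bigID (fun u => d < deg_in S u)) /= leq_add //.
  rewrite (eq_bigr (fun=> q - m.+1)) => [|u /andP [_ heavy_u]]; last first.
    by rewrite /threshold heavy_u.
  rewrite (eq_bigl (mem [set u in S | adj v u && (d < deg_in S u)])) => [|u]; last first.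
    by rewrite !inE andbA.
  by rewrite sum_nat_const -[X in _ <= X]mul1n leq_mul.
rewrite (eq_bigr (fun=> t)) => [|u /andP [_ /negbTE light_u]]; last first.
  by rewrite /threshold light_u.
rewrite (eq_bigl (mem [set u in [set u in S | adj v u] | d >= deg_in S u])) => [|u]; last first.
  by rewrite !inE -leqNgt.
by rewrite sum_nat_const leq_mul // (leq_trans _ deg_v) // setIdE subset_leq_card ?subsetIl.
Qed.

Lemma safe_colour (c : {ffun G -> 'I_q}) : (forall u, u \in S :\ v -> c u \notin lifted u c) ->
  exists x, x \notin g v c /\ forall u, u \in S -> adj v u -> c u \notin g_at u c x.
Proof.
move=> avoid_c; pose N := [set u in S | adj v u].
pose bad u := [set x | c u \in g_at u c x].
have card_bad u : u \in N -> #|bad u| <= threshold u.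
  rewrite inE => /andP [uS vu]; have /avoid_c : u \in S :\ v.
    by rewrite !inE uS andbT; apply: contraTneq vu => ->; rewrite adj_irr.
  by rewrite /lifted uS vu inE -leqNgt.
pose Bad := g v c :|: \bigcup_(u in N) bad u.
have card_Bad : #|Bad| < q.
  have gv_le : #|g v c| <= (4 * d) ^ d.
    exact: leq_trans (g_budget c vS) (leq_pexp2l four_d_gt0 (leq_subr _ _)).
  have bad_le : #|\bigcup_(u in N) bad u| <= q - m.+1 + d * t.
    apply: leq_trans (card_bigcup_le _ _) (leq_trans _ sum_threshold).
    exact: leq_sum.
  apply: leq_ltn_trans (leq_card_setU _ _).1 (leq_ltn_trans (leq_add gv_le bad_le) _).
  by have := m_small; rewrite /m; move: ((4 * d) ^ d) (d * t) => P D; lia.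
have /card_gt0P [x] : 0 < #|~: Bad| by have := cardsC Bad; rewrite card_ord; lia.
rewrite !inE negb_or => /andP [x_gv x_bad]; exists x; split=> // u uS vu.
by apply: contra x_bad => u_bad; apply/bigcupP; exists u; rewrite ?inE ?uS.
Qed.

Lemma lifted_avoidable : avoidable (S :\ v) lifted -> avoidable S g.
Proof.
case=> c avoid_c; have [x [x_gv x_nbrs]] := safe_colour avoid_c.
exists (recolour c v x) => u uS; rewrite ffunE.
case: eqP => [-> | /eqP uv]; first by rewrite g_recolour_nonadj ?adj_irr.
have [vu | nvu] := boolP (adj v u); first exact: x_nbrs.
have /avoid_c : u \in S :\ v by rewrite !inE uS uv.
by rewrite /lifted uS (negbTE nvu) g_recolour_nonadj // adj_sym.
Qed.

Lemma avoidable_remove_vertex :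
  (forall g', local_on (S :\ v) g' -> within_budget (S :\ v) g' -> avoidable (S :\ v) g') ->
  avoidable S g.
Proof. by move=> IH; apply/lifted_avoidable/IH; [apply: lifted_local | apply: lifted_budget]. Qed.

End RemoveVertex.

Lemma strongly_degenerate_avoidable S g : 0 < d -> 4 * (4 * d) ^ d < q ->
  strongly_degenerate d G -> local_on S g -> within_budget S g -> avoidable S g.
Proof.
move=> d_gt0 q_large sdeg; have [n] := ubnP #|S|; elim: n S g => // n IH S g.
rewrite ltnS => card_S g_local g_budget.
have [S0 | /sdeg] := eqVneq S set0.
  have q_gt0 : 0 < q by lia.
  by exists [ffun=> Ordinal q_gt0] => v; rewrite S0 inE.
case/(_ [set A in edges G | A \subset S] (induced_subgraph S)) => v /removable_induced.
case=> vS deg_v heavy_v.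
apply: (avoidable_remove_vertex (v := v)) => // g' g'_local g'_budget.
by apply: IH => //; rewrite (cardsD1 v) vS in card_S.
Qed.

End HatGame.

Lemma strongly_degenerate_HG_le (G : sgraph) d :
  0 < d -> strongly_degenerate d G -> HG_le G (4 * (4 * d) ^ d).
Proof.
move=> d_gt0 sdeg q [f win]; rewrite leqNgt; apply/negP => q_large.
pose g v (c : {ffun G -> 'I_q}) := [set f v [ffun w : nbhd_type v => c (val w)]].
have [c avoid_c] : avoidable [set: G] g.
  apply: (strongly_degenerate_avoidable (d := d)) => // [v _ c c' cc' | v c _].
    by congr [set f v _]; apply/ffunP => w; rewrite !ffunE; apply: cc' (valP w).
  by rewrite cards1 expn_gt0 muln_gt0 d_gt0.
have [v fv] := win c.
by have := avoid_c v (in_setT v); rewrite in_set1 fv eqxx.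
Qed.

Unset Implicit Arguments.

Theorem corollary1p6 (GC : sgraph -> Prop) (s : nat) :
  bounded_expansion GC ->
  exists d : nat, 1 <= d /\
    forall G : sgraph, GC G -> K2s_free G s ->
      strongly_degenerate d G /\ HG_le G ((2 * d) ^ d).
Proof.
move=> BE; have [C nabC] := BE 1.
have [D D_gt0 large] := rat_le_nat_eventually (2%:R * C * (1 + s%:R * C))%R.
exists (4 * D); split; first by lia.
move=> G GG K2; have degenerate n : D <= n -> strongly_degenerate n G.
  by move/large; apply: K2s_free_strongly_degenerate (nabC G GG) K2.
split; first by apply: degenerate; lia.
move=> q /(strongly_degenerate_HG_le D_gt0 (degenerate D (leqnn D))) q_le.
exact: leq_trans q_le (hat_bound_le D_gt0).
Qed.
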